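(* Let $\mathcal{U}=\{u_1,\ldots,u_M\}\subset\mathbb{R}\setminus\{0\}$, integers $N>k\ge1$, $\sigma_{N/k}^2>0$, and $y\in\mathbb{R}^N$. Let $[y]_{(i)}$ denote the $i$th largest entry of $y$. For $k_0\in\{0,\ldots,k\}$ define $$\xi_k^N(k_0;y)=\sum_{i=1}^{k_0}\min_{u\in\mathcal{U}}([y]_{(i)}-u)^2+\sum_{i=k_0+1}^{N-(k-k_0)}[y]_{(i)}^2+\sum_{i=N-(k-k_0)+1}^{N}\min_{u\in\mathcal{U}}([y]_{(i)}-u)^2,$$ and let $k_*\in\operatorname{argmin}_{k_0\in\{0,\ldots,k\}}\xi_k^N(k_0;y)$. Let $\mathcal{N}_1$ be the set of indices of the $k_*$ largest entries of $y$, $\mathcal{N}_2$ the set of indices of the $k-k_*$ smallest entries of $y$, and $\mathcal{N}_3=\{1,\ldots,N\}\setminus(\mathcal{N}_1\cup\mathcal{N}_2)$. Then the ML estimator $\hat{x}_{\mathrm{ML}}\in\operatorname{argmax}_{x\in\mathcal{X}_k^N(\mathcal{U})}p(y\mid x)$ satisfies $\hat{x}_{\mathrm{ML},n}=0$ for all $n\in\mathcal{N}_3$ and $\hat{x}_{\mathrm{ML},n}=\operatorname{argmin}_{u\in\mathcal{U}}(y_n-u)^2$ for all $n\in\mathcal{N}_1\cup\mathcal{N}_2$.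
   Context: $\mathcal{X}_k^N(\mathcal{U})$ is the set of $x\in\mathbb{R}^N$ with exactly $k$ nonzero entries, each belonging to $\mathcal{U}$. $p(y\mid x)=(2\pi\sigma_{N/k}^2)^{-N/2}\exp(-\|y-x\|_2^2/(2\sigma_{N/k}^2))$. Sums $\sum_{i=a}^{b}$ with $a>b$ are zero. *)

From HB Require Import structures.
From mathcomp Require Import all_boot all_order all_algebra all_fingroup.
From mathcomp Require Import all_classical all_reals all_analysis.
Set Implicit Arguments. Unset Strict Implicit. Unset Printing Implicit Defensive.
Import Order.TTheory GRing.Theory Num.Theory.
Local Open Scope ring_scope.

Section Defs.
Variable R : realType.

Definition minsq (U : seq R) (t : R) : R :=
  \big[Order.min/(t - head 0 U) ^+ 2]_(u <- U) (t - u) ^+ 2.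

Definition is_argminU (U : seq R) (t u : R) : Prop :=
  u \in U /\ forall v, v \in U -> (t - u) ^+ 2 <= (t - v) ^+ 2.

Definition in_X (N k : nat) (U : seq R) (x : 'I_N -> R) : Prop :=
  #|[set n | x n != 0]| = k /\ forall n, x n != 0 -> x n \in U.

(* Gaussian likelihood p(y | x) with variance s2 = sigma_{N/k}^2 *)
Definition lik (N : nat) (s2 : R) (y x : 'I_N -> R) : R :=
  powR (2 * pi * s2) (- (N%:R / 2)) *
  expR (- (\sum_(n < N) (y n - x n) ^+ 2) / (2 * s2)).

(* s sorts y in nonincreasing order: [y]_(i+1) = y (s i) (0-indexed i) *)
Definition sorts_desc (N : nat) (y : 'I_N -> R) (s : {perm 'I_N}) : Prop :=
  forall i j : 'I_N, (i <= j)%N -> y (s j) <= y (s i).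

(* xi_k^N(k0; y), written with 0-indexed sorted positions i:
   positions i < k0 and i >= N-(k-k0) use minsq, the others use y^2 *)
Definition xi (N k : nat) (U : seq R) (y : 'I_N -> R) (s : {perm 'I_N})
    (k0 : nat) : R :=
  \sum_(i < N) (if (i < k0)%N || (N - (k - k0) <= i)%N
                then minsq U (y (s i)) else y (s i) ^+ 2).

End Defs.

(* For x in X_k^N(U) with support S, ||y - x||^2 >= sum_n y_n^2 - sum_(n in S) g(y_n),
   where g(t) = t^2 - min_u (t - u)^2 is the gain of quantizing t rather than zeroing
   it, with equality when x quantizes y optimally on S.  Since g(t) = max_u u (2t - u)
   is a maximum of affine functions, it is quasiconvex; so along y sorted decreasingly
   the gains are largest at the two ends, and an exchange argument shows that the
   k0 largest and k - k0 smallest entries, for some k0, gain at least as much as S.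
   Hence xi(k0; y) <= ||y - x||^2, and the estimator built from an optimal k_*
   attains xi(k_*; y), the least squared error; the Gaussian likelihood is a
   decreasing function of the squared error. *)

From HB Require Import structures.
From mathcomp Require Import all_boot all_order all_algebra all_fingroup.
From mathcomp Require Import all_classical all_reals all_analysis.
From mathcomp Require Import lra zify.
Set Implicit Arguments. Unset Strict Implicit. Unset Printing Implicit Defensive.
Import Order.TTheory GRing.Theory Num.Theory.
Local Open Scope ring_scope.

Section Alphabet.
Variables (R : realType) (U : seq R).

Lemma minsq_le t u : u \in U -> minsq U t <= (t - u) ^+ 2.
Proof. by move=> uU; apply: ge_bigmin_seq. Qed.

Lemma minsq_attained t : U != [::] -> exists2 u, u \in U & minsq U t = (t - u) ^+ 2.
Proof.
move=> U0; rewrite /minsq big_seq.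
apply: (big_ind (fun m => exists2 u, u \in U & m = (t - u) ^+ 2)).
- by exists (head 0 U) => //; case: U U0 => //= u r _; rewrite mem_head.
- move=> _ _ [u uU ->] [v vU ->].
  by case: leP => _; [exists u | exists v].
- by move=> u uU; exists u.
Qed.

Lemma is_argminU_minsq t u : U != [::] -> is_argminU U t u -> (t - u) ^+ 2 = minsq U t.
Proof.
move=> U0 [uU u_min]; apply/eqP; rewrite eq_le minsq_le // andbT.
by have [v vU ->] := minsq_attained t U0; apply: u_min.
Qed.

Definition sqr_gain t := t ^+ 2 - minsq U t.

Lemma sqr_gain_quasiconvex tl tj ti : U != [::] -> tl <= tj <= ti ->
  sqr_gain tj <= Num.max (sqr_gain ti) (sqr_gain tl).
Proof.
move=> U0 /andP[le_lj le_ji]; have [u uU minE] := minsq_attained tj U0.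
(* t ^+ 2 - (t - u) ^+ 2 = u * (2 t - u) is monotone in t, in the direction of sign u. *)
have := minsq_le ti uU; have := minsq_le tl uU.
rewrite /sqr_gain minE le_max; case: (lerP 0 u) => u_sign ? ?; apply/orP.
- by left; nra.
- by right; nra.
Qed.

Lemma sqr_err_ge_gain (N : nat) (y x : 'I_N -> R) :
  (forall n, x n != 0 -> x n \in U) ->
  \sum_n y n ^+ 2 - \sum_(n | x n != 0) sqr_gain (y n) <= \sum_n (y n - x n) ^+ 2.
Proof.
move=> xU; rewrite [X in _ - X]big_mkcond -sumrB; apply: ler_sum => n _.
case: ifPn => [/xU xnU|/negPn/eqP->]; last by rewrite subr0 subr0.
by rewrite /sqr_gain opprB addrC subrK minsq_le.
Qed.

End Alphabet.

Lemma lik_le (R : realType) (N : nat) (s2 : R) (y x x' : 'I_N -> R) : 0 < s2 ->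
  \sum_n (y n - x' n) ^+ 2 <= \sum_n (y n - x n) ^+ 2 -> lik s2 y x <= lik s2 y x'.
Proof.
move=> s2_gt0 le_err; rewrite /lik ler_wpM2l ?powR_ge0 // ler_expR.
by rewrite ler_wpM2r ?lerN2 // invr_ge0; lra.
Qed.

Section QuasiconvexSum.
Variables (R : realDomainType) (b : nat -> R).

Definition quasiconvex_on (lo hi : nat) : Prop :=
  forall i j l, (lo <= i)%N -> (i <= j <= l)%N -> (l < hi)%N ->
  b j <= Num.max (b i) (b l).

Lemma sum_exchange (P : seq nat) c : uniq P -> P != [::] ->
    (forall p, p \in P -> b p <= b c) ->
  exists P', [/\ uniq P', size P' = (size P).-1, {subset P' <= [predD1 P & c]}
                 & \sum_(p <- P) b p <= b c + \sum_(p <- P') b p].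
Proof.
move=> uP P0 le_c.
have headP : head 0%N P \in P by case: P P0 {uP le_c} => // q P _; rewrite mem_head.
pose p := if c \in P then c else head 0%N P.
have pP : p \in P by rewrite /p; case: ifP.
exists (rem p P); split; first exact: rem_uniq.
- by rewrite size_rem.
- move=> q; rewrite (mem_rem_uniq _ uP) !inE => /andP[qp qP]; rewrite qP andbT.
  by move: qp; rewrite /p; case: ifP => // cP _; apply: contraFneq cP => <-.
- by rewrite (perm_big _ (perm_to_rem pP)) big_cons lerD2r le_c.
Qed.

Lemma quasiconvex_onS lo hi lo' hi' : (lo <= lo')%N -> (hi' <= hi)%N ->
  quasiconvex_on lo hi -> quasiconvex_on lo' hi'.
Proof. by move=> le_lo le_hi qc i j l *; apply: qc => //; lia. Qed.

Lemma quasiconvex_on_le_ends lo hi q : quasiconvex_on lo hi ->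
  (lo <= q < hi)%N -> b q <= Num.max (b lo) (b hi.-1).
Proof. by move=> qc q_range; apply: qc; lia. Qed.

Lemma quasiconvex_sum_le_prefix_suffix lo hi (P : seq nat) : quasiconvex_on lo hi ->
    uniq P -> {subset P <= index_iota lo hi} ->
  exists2 k0, (k0 <= size P)%N & \sum_(p <- P) b p <=
    \sum_(lo <= p < lo + k0) b p + \sum_(hi - (size P - k0) <= p < hi) b p.
Proof.
move Hm : (size P) => m; elim: m lo hi P Hm => [|m IH] lo hi P sP qc uP subP.
  by exists 0%N => //; rewrite (size0nil sP) big_nil !big_geq ?addr0 ?lexx //; lia.
have P0 : P != [::] by rewrite -size_eq0 sP.
case: hi qc subP => [|h] qc subP.
  by case: P P0 subP {sP uP} => // p P _ /(_ p (mem_head _ _)).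
have le_ends q : q \in P -> b q <= Num.max (b lo) (b h).
  by move/subP; rewrite mem_index_iota; apply: quasiconvex_on_le_ends.
have sub_range (P' : seq nat) c : {subset P' <= [predD1 P & c]} ->
    {subset P' <= [pred q | (q != c) && (lo <= q <= h)%N]}.
  by move=> subP' q /subP' /andP[q_c /subP]; rewrite mem_index_iota inE q_c.
have [le_h_lo|lt_lo_h] := lerP (b h) (b lo).
- have le_lo q : q \in P -> b q <= b lo by move/le_ends; rewrite max_l.
  have [P' [uP' sP' /sub_range subP' le_P]] := sum_exchange uP P0 le_lo.
  have P'_range : {subset P' <= index_iota lo.+1 h.+1}.
    by move=> q /subP' /andP[]; rewrite mem_index_iota neq_ltn; lia.
  have [k0 k0m le_P'] := IH lo.+1 h.+1 P' ltac:(by rewrite sP' sP)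
    (quasiconvex_onS (leqnSn lo) (leqnn _) qc) uP' P'_range.
  exists k0.+1 => //.
  rewrite subSS (big_ltn (m := lo)) -?addSnnS -?addrA; last by lia.
  by rewrite (le_trans le_P) // lerD2l.
- have le_h q : q \in P -> b q <= b h by move/le_ends; rewrite max_r // ltW.
  have [P' [uP' sP' /sub_range subP' le_P]] := sum_exchange uP P0 le_h.
  have P'_range : {subset P' <= index_iota lo h}.
    by move=> q /subP' /andP[]; rewrite mem_index_iota neq_ltn; lia.
  have [k0 k0m le_P'] := IH lo h P' ltac:(by rewrite sP' sP)
    (quasiconvex_onS (leqnn lo) (leqnSn h) qc) uP' P'_range.
  exists k0; first exact: leqW.
  have -> : (h.+1 - (m.+1 - k0) = h - (m - k0))%N by lia.
  rewrite big_nat_recr ?leq_subr //=.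
  by rewrite [_ + b _]addrC addrCA (le_trans le_P) // lerD2l.
Qed.

End QuasiconvexSum.

Definition extremal_rank (N k k0 i : nat) : bool := (i < k0)%N || (N - (k - k0) <= i)%N.

Lemma sum_extremal_rank (V : nmodType) (N k k0 : nat) (F : nat -> V) :
    (k0 <= k <= N)%N ->
  \sum_(i < N | extremal_rank N k k0 i) F i =
    \sum_(0 <= i < k0) F i + \sum_(N - (k - k0) <= i < N) F i.
Proof.
move=> /andP[k0k kN]; rewrite -(big_mkord (extremal_rank N k k0)).
rewrite (big_cat_nat _ (n := k0)) //=; last by lia.
rewrite (big_cat_nat _ (m := k0) (n := (N - (k - k0))%N)) //=; [|lia|lia].
rewrite [X in _ + (X + _)]big1_seq ?add0r; last first.
  by move=> i /andP[+ /[!mem_index_iota] ?]; rewrite /extremal_rank; lia.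
congr (_ + _); rewrite -big_filter; congr bigop; apply/all_filterP/allP => i.
  by rewrite mem_index_iota /extremal_rank; lia.
by rewrite mem_index_iota /extremal_rank; lia.
Qed.

Lemma card_extremal_rank (N k k0 : nat) : (k0 <= k <= N)%N ->
  #|[set i : 'I_N | extremal_rank N k k0 i]| = k.
Proof.
move=> kk; rewrite cardsE -sum1_card.
rewrite (@sum_extremal_rank nat _ _ _ (fun _ => 1%N) kk) !sum_nat_const_nat; lia.
Qed.

Section SortedObservation.
Variables (R : realType) (U : seq R) (N k : nat) (y : 'I_N -> R) (s : {perm 'I_N}).
Hypotheses (U0 : U != [::]) (y_sorted : sorts_desc y s) (kN : (k <= N)%N).

Definition sorted_gain (p : nat) : R :=
  if insub p is Some i then sqr_gain U (y (s i)) else 0.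

Lemma sorted_gain_ord (i : 'I_N) : sorted_gain i = sqr_gain U (y (s i)).
Proof. by rewrite /sorted_gain valK. Qed.

Lemma sorted_gain_quasiconvex : quasiconvex_on sorted_gain 0 N.
Proof.
move=> i j l _ /andP[le_ij le_jl] lt_lN.
have lt_iN : (i < N)%N by lia.
have lt_jN : (j < N)%N by lia.
rewrite -[i]/(val (Ordinal lt_iN)) -[j]/(val (Ordinal lt_jN)).
rewrite -[l]/(val (Ordinal lt_lN)) !sorted_gain_ord.
by apply: sqr_gain_quasiconvex; rewrite // !y_sorted.
Qed.

Lemma xi_sorted_gain k0 : (k0 <= k)%N ->
  xi k U y s k0 = \sum_n y n ^+ 2 -
    (\sum_(0 <= p < k0) sorted_gain p + \sum_(N - (k - k0) <= p < N) sorted_gain p).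
Proof.
move=> k0k; rewrite -sum_extremal_rank ?k0k //.
rewrite (reindex_inj (@perm_inj _ s)) [X in _ - X]big_mkcond -sumrB /xi.
apply: eq_bigr => i _.
rewrite /extremal_rank; case: ifP => _; last by rewrite subr0.
by rewrite sorted_gain_ord /sqr_gain opprB addrC subrK.
Qed.

Lemma xi_le_sqr_err x : in_X k U x ->
  exists2 k0, (k0 <= k)%N & xi k U y s k0 <= \sum_n (y n - x n) ^+ 2.
Proof.
move=> [card_x x_U].
pose P := [seq val (s^-1 n)%g | n <- enum [set n | x n != 0]].
have P_uniq : uniq P.
  by rewrite map_inj_uniq ?enum_uniq // => n1 n2 /val_inj; apply: perm_inj.
have P_size : size P = k by rewrite size_map -cardE card_x.
have P_sub : {subset P <= index_iota 0 N}.
  by move=> p /mapP[n _ ->]; rewrite mem_index_iota ltn_ord.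
have P_gain : \sum_(p <- P) sorted_gain p = \sum_(n | x n != 0) sqr_gain U (y n).
  rewrite big_map big_enum; apply: eq_big => n; first by rewrite inE.
  by rewrite sorted_gain_ord permKV.
have [k0 k0k le_gain] :=
  quasiconvex_sum_le_prefix_suffix sorted_gain_quasiconvex P_uniq P_sub.
rewrite P_size add0n in k0k le_gain.
exists k0 => //; rewrite xi_sorted_gain //.
by apply: le_trans (sqr_err_ge_gain y x_U); rewrite lerB // -P_gain.
Qed.

End SortedObservation.

Section Estimator.
Variables (R : realType) (U : seq R) (N k kstar : nat).
Variables (y xhat : 'I_N -> R) (s : {perm 'I_N}).
Hypotheses (U0 : U != [::]) (U_nz : 0 \notin U).
Hypothesis xhat_extremal : forall i : 'I_N,
  extremal_rank N k kstar i -> is_argminU U (y (s i)) (xhat (s i)).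
Hypothesis xhat_inner : forall i : 'I_N,
  ~~ extremal_rank N k kstar i -> xhat (s i) = 0.

Lemma xhat_neq0 (i : 'I_N) : (xhat (s i) != 0) = extremal_rank N k kstar i.
Proof.
case: (boolP (extremal_rank _ _ _ _)) => [/xhat_extremal[xU _]|/xhat_inner->].
  by apply: contraNneq U_nz => <-.
by rewrite eqxx.
Qed.

Lemma xhat_in_X : (kstar <= k <= N)%N -> in_X k U xhat.
Proof.
move=> kk; split=> [|n]; last first.
  by rewrite -(permKV s n) xhat_neq0 => /xhat_extremal[].
rewrite -(card_preimset _ (@perm_inj _ s)) -[RHS](card_extremal_rank kk).
by apply: eq_card => i; rewrite !inE xhat_neq0.
Qed.

Lemma sqr_err_xhat : \sum_n (y n - xhat n) ^+ 2 = xi k U y s kstar.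
Proof.
rewrite /xi (reindex_inj (@perm_inj _ s)); apply: eq_bigr => i _.
case: ifP => [/xhat_extremal/(is_argminU_minsq U0)//|/negbT/xhat_inner->].
by rewrite subr0.
Qed.

End Estimator.

Theorem proposition1 (R : realType) (U : seq R) (N k : nat) (s2 : R)
    (y : 'I_N -> R) (s : {perm 'I_N}) (kstar : nat) (xhat : 'I_N -> R) :
  U != [::] -> 0 \notin U ->
  (1 <= k)%N -> (k < N)%N -> 0 < s2 ->
  sorts_desc y s ->
  (kstar <= k)%N ->
  (forall k0 : nat, (k0 <= k)%N -> xi k U y s kstar <= xi k U y s k0) ->
  (* N1 = s @: {i < kstar}, N2 = s @: {i >= N - (k - kstar)}, N3 = the rest *)
  (forall i : 'I_N,
     ((i < kstar)%N || (N - (k - kstar) <= i)%N) ->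
     is_argminU U (y (s i)) (xhat (s i))) ->
  (forall i : 'I_N,
     ~~ ((i < kstar)%N || (N - (k - kstar) <= i)%N) -> xhat (s i) = 0) ->
  in_X k U xhat /\
  (forall x : 'I_N -> R, in_X k U x -> lik s2 y x <= lik s2 y xhat).
Proof.
move=> U0 U_nz _ /ltnW kN s2_gt0 y_sorted kstar_k kstar_min xhat_extremal xhat_inner.
split=> [|x xX].
  by apply: (xhat_in_X U_nz xhat_extremal xhat_inner); rewrite kstar_k.
apply: lik_le => //; rewrite (sqr_err_xhat U0 xhat_extremal xhat_inner).
have [k0 k0k le_err] := xi_le_sqr_err U0 y_sorted kN xX.
exact: le_trans (kstar_min k0 k0k) le_err.
Qed.
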